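(* Let $M$ be a nearly finitary matroid that is not $k$-nearly finitary for any $k\in\mathbb{N}$, and let $N$ be a nearly finitary matroid whose ground set $E(N)$ is disjoint from $E(M)$. Then $M\vee N$ is a nearly finitary matroid that is not $k$-nearly finitary for any $k\in\mathbb{N}$.
   Context: Matroids (possibly infinite): $\emptyset$ independent; subsets of independent sets independent; if $B$ is maximal independent and $A$ non-maximal independent, then $A\cup\{b\}$ is independent for some $b\in B\setminus A$; for independent $A\subseteq X\subseteq E$ there is a maximal independent $S$ with $A\subseteq S\subseteq X$. Bases are maximal independent sets. The union $M\vee N$ has ground set $E(M)\cup E(N)$ and independent sets $\{S\cup T: S\text{ independent in }M,\ T\text{ independent in }N\}$. The finitarization $M^{\mathrm{fin}}$ has as independent sets those sets all of whose finite subsets are independent in $M$. $M$ is nearly finitary if $F\setminus B$ is finite whenever a base $F$ of $M^{\mathrm{fin}}$ contains a base $B$ of $M$; $k$-nearly finitary if $|F\setminus B|\le k$ for all such pairs. *)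

From Stdlib Require Import List.

Set Implicit Arguments.

Definition set (E : Type) := E -> Prop.

Section Matroids.
Variable E : Type.

Definition subset (A B : set E) : Prop := forall x, A x -> B x.
Definition setU (A B : set E) : set E := fun x => A x \/ B x.
Definition setD (A B : set E) : set E := fun x => A x /\ ~ B x.
Definition add1 (A : set E) (b : E) : set E := fun x => A x \/ x = b.
Definition disjoint (A B : set E) : Prop := forall x, A x -> B x -> False.

Definition finite_set (A : set E) : Prop :=
  exists l : list E, forall x, A x -> In x l.

Definition card_le (A : set E) (k : nat) : Prop :=
  exists l : list E, length l <= k /\ forall x, A x -> In x l.

Record matroid := Matroid { ground : set E; indep : set E -> Prop }.

Definition maximal_in (P : set E -> Prop) (S : set E) : Prop :=
  P S /\ forall T, P T -> subset S T -> subset T S.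

Definition is_base (M : matroid) (B : set E) : Prop := maximal_in (indep M) B.

(* Matroid axioms (I1)-(I3),(IM) from the paper, plus independent sets
   lie inside the ground set. *)
Definition is_matroid (M : matroid) : Prop :=
  (forall I, indep M I -> subset I (ground M)) /\
  indep M (fun _ => False) /\
  (forall A B, indep M A -> subset B A -> indep M B) /\
  (forall A B, is_base M B -> indep M A -> ~ is_base M A ->
     exists b, B b /\ ~ A b /\ indep M (add1 A b)) /\
  (forall A X, indep M A -> subset A X -> subset X (ground M) ->
     exists S, maximal_in (fun I => indep M I /\ subset I X) S /\
               subset A S /\ subset S X).

Definition matroid_union (M N : matroid) : matroid :=
  Matroid (setU (ground M) (ground N))
          (fun I => exists S T, indep M S /\ indep N T /\
                      forall x, I x <-> (S x \/ T x)).

Definition finitarization (M : matroid) : matroid :=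
  Matroid (ground M)
          (fun I => subset I (ground M) /\
                    forall J, subset J I -> finite_set J -> indep M J).

Definition nearly_finitary (M : matroid) : Prop :=
  forall F B, is_base (finitarization M) F -> is_base M B -> subset B F ->
    finite_set (setD F B).

Definition k_nearly_finitary (k : nat) (M : matroid) : Prop :=
  forall F B, is_base (finitarization M) F -> is_base M B -> subset B F ->
    card_le (setD F B) k.

End Matroids.

(* The ground sets being disjoint, a set I is independent in M \/ N exactly when its traces on
   E(M) and E(N) are independent in M and N, and the same holds for the finitarizations.  Hence
   bases of M \/ N and of its finitarization are exactly the disjoint unions of bases of the
   summands, and F \ B splits as (F_M \ B_M) u (F_N \ B_N).  This gives near finitarity of the
   union; conversely, padding a pair (F_M, B_M) of M with a base B_N of N and a base F_N of the
   finitarization containing it (Zorn) leaves F \ B = F_M \ B_M, so no bound k can work for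
   M \/ N either. *)

From Stdlib Require Import List Classical FunctionalExtensionality PropExtensionality.
From mathcomp Require classical_sets.

Set Implicit Arguments.

Section Sets.
Variable E : Type.
Implicit Types A B X Y J : set E.

Definition setI A B : set E := fun x => A x /\ B x.
Definition bigcup (F : set E -> Prop) : set E := fun x => exists2 X, F X & X x.
Definition chain (F : set E -> Prop) : Prop :=
  forall X Y, F X -> F Y -> subset X Y \/ subset Y X.

Lemma set_ext A B : (forall x, A x <-> B x) -> A = B.
Proof.
intros AB; apply functional_extensionality; intros x.
apply propositional_extensionality, AB.
Qed.

Lemma setI_setU_l gM gN X Y :
  disjoint gM gN -> subset X gM -> subset Y gN -> setI (setU X Y) gM = X.
Proof.
intros D XgM YgN; apply set_ext; intros x; split.
- intros [[Xx|Yx] gx]; [exact Xx | destruct (D x gx (YgN x Yx))].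
- intros Xx; split; [left; exact Xx | exact (XgM x Xx)].
Qed.

Lemma setI_setU_r gM gN X Y :
  disjoint gM gN -> subset X gM -> subset Y gN -> setI (setU X Y) gN = Y.
Proof.
intros D XgM YgN; apply set_ext; intros x; split.
- intros [[Xx|Yx] gx]; [destruct (D x (XgM x Xx) gx) | exact Yx].
- intros Yx; split; [right; exact Yx | exact (YgN x Yx)].
Qed.

Lemma finite_subset A B : subset A B -> finite_set B -> finite_set A.
Proof. intros AB [l Bl]; exists l; intros x Ax; exact (Bl x (AB x Ax)). Qed.

Lemma finite_setU A B : finite_set A -> finite_set B -> finite_set (setU A B).
Proof.
intros [l Al] [m Bm]; exists (l ++ m); intros x [Ax|Bx]; apply in_or_app;
  [left; exact (Al x Ax) | right; exact (Bm x Bx)].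
Qed.

Lemma card_le_subset A B k : subset A B -> card_le B k -> card_le A k.
Proof.
intros AB [l [lk Bl]]; exists l.
split; [exact lk | intros x Ax; exact (Bl x (AB x Ax))].
Qed.

Lemma chain_finite_cover F B J :
  chain F -> finite_set J -> subset J (setU (bigcup F) B) ->
  subset J B \/ exists2 X, F X & subset J (setU X B).
Proof.
intros Fchain [l Jl] JFB.
assert (cover : forall l', (forall x, In x l' -> J x -> B x) \/
                  exists2 X, F X & forall x, In x l' -> J x -> setU X B x).
{ induction l' as [|a l' IH]; [left; intros x [] |].
  destruct (classic (exists2 Y, F Y & J a /\ Y a)) as [[Y FY [_ Ya]] | notFa].
  - right; destruct IH as [inB | [X FX inX]].
    + exists Y; [exact FY |].
      intros x [-> | lx] Jx; [left; exact Ya | right; exact (inB x lx Jx)].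
    + destruct (Fchain X Y FX FY) as [XY | YX].
      * exists Y; [exact FY |]. intros x [-> | lx] Jx; [left; exact Ya |].
        destruct (inX x lx Jx) as [Xx | Bx]; [left; exact (XY x Xx) | right; exact Bx].
      * exists X; [exact FX |].
        intros x [-> | lx] Jx; [left; exact (YX x Ya) | exact (inX x lx Jx)].
  - assert (aB : J a -> B a).
    { intros Ja; destruct (JFB a Ja) as [[Y FY Ya] | Ba];
        [destruct notFa; exists Y; auto | exact Ba]. }
    destruct IH as [inB | [X FX inX]]; [left | right; exists X; [exact FX |]];
      intros x [-> | lx] Jx; auto; right; auto. }
destruct (cover l) as [inB | [X FX inX]]; [left | right; exists X; [exact FX |]];
  intros x Jx; auto.
Qed.

Lemma Zorn_chain_union (P : set E -> Prop) :
  (forall F, (forall X, F X -> P X) -> chain F -> P (bigcup F)) ->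
  exists A, P A /\ forall B, subset A B -> ~ subset B A -> ~ P B.
Proof.
intros Pchain.
destruct (@classical_sets.Zorn_bigcup E P) as [A [PA maxA]]; [exact Pchain |].
exists A; split; [exact PA |]; intros B AB BA; apply maxA; split; assumption.
Qed.

End Sets.

Section MatroidAxioms.
Variables (E : Type) (M : matroid E).
Hypothesis HM : is_matroid M.

Lemma indep_ground {I} : indep M I -> subset I (ground M).
Proof. exact (proj1 HM I). Qed.

Lemma indep0 : indep M (fun _ => False).
Proof. exact (proj1 (proj2 HM)). Qed.

Lemma indep_subset {A B} : indep M A -> subset B A -> indep M B.
Proof. exact (proj1 (proj2 (proj2 HM)) A B). Qed.

Lemma base_augment {A B} :
  is_base M B -> indep M A -> ~ is_base M A ->
  exists b, B b /\ ~ A b /\ indep M (add1 A b).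
Proof. exact (proj1 (proj2 (proj2 (proj2 HM))) A B). Qed.

Lemma indep_maximal_extension {A X} :
  indep M A -> subset A X -> subset X (ground M) ->
  exists S, maximal_in (fun I => indep M I /\ subset I X) S /\ subset A S /\ subset S X.
Proof. exact (proj2 (proj2 (proj2 (proj2 HM))) A X). Qed.

Lemma exists_base : exists B, is_base M B.
Proof.
destruct (indep_maximal_extension indep0 (fun x (h : False) => False_ind _ h)
            (fun x h => h)) as [B [[[HB _] maxB] _]].
exists B; split; [exact HB |].
intros T HT BT; exact (maxB T (conj HT (indep_ground HT)) BT).
Qed.

Lemma indep_finitarization_subset {A B} :
  indep (finitarization M) A -> subset B A -> indep (finitarization M) B.
Proof.
intros [Ag Afin] BA; split; [intros x Bx; exact (Ag x (BA x Bx)) |].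
intros J JB; apply Afin; intros x Jx; exact (BA x (JB x Jx)).
Qed.

(* Zorn is applied to the sets X with X u B finitarily independent, rather than to the
   supersets of B, so that the empty chain is harmless. *)
Lemma exists_finitarization_base_superset {B} :
  indep M B -> exists F, is_base (finitarization M) F /\ subset B F.
Proof.
intros HB.
destruct (@Zorn_chain_union E (fun X => indep (finitarization M) (setU X B)))
  as [A [HA maxA]].
- intros F FP Fchain; split.
  + intros x [[X FX Xx] | Bx];
      [exact (proj1 (FP X FX) x (or_introl Xx)) | exact (indep_ground HB x Bx)].
  + intros J JFB Jfin.
    destruct (chain_finite_cover Fchain Jfin JFB) as [JB | [X FX JXB]].
    * exact (indep_subset HB JB).
    * exact (proj2 (FP X FX) J JXB Jfin).
- exists (setU A B); split; [split; [exact HA |] | intros x Bx; right; exact Bx].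
  intros T HT AT x Tx; left.
  apply NNPP; intros nAx; apply (maxA T).
  + intros y Ay; exact (AT y (or_introl Ay)).
  + intros TA; exact (nAx (TA x Tx)).
  + apply (indep_finitarization_subset HT).
    intros y [Ty | By]; [exact Ty | exact (AT y (or_intror By))].
Qed.

End MatroidAxioms.

Section SumFamily.
Variables (E : Type) (gM gN : set E) (PM PN : set E -> Prop).

Definition sum_family : set E -> Prop :=
  fun I => subset I (setU gM gN) /\ PM (setI I gM) /\ PN (setI I gN).

Hypotheses (D : disjoint gM gN) (PM_ground : forall X, PM X -> subset X gM).

Lemma sum_family_add1_l A b :
  sum_family A -> gM b -> PM (add1 (setI A gM) b) -> sum_family (add1 A b).
Proof.
intros [Ag [_ HAN]] gb HAbM; split; [|split].
- intros x [Ax | ->]; [exact (Ag x Ax) | left; exact gb].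
- replace (setI (add1 A b) gM) with (add1 (setI A gM) b); [exact HAbM |].
  apply set_ext; intros x; split.
  + intros [Ax | ->]; [split; [left |]; apply Ax | split; [right |]; auto].
  + intros [[Ax | ->] gx]; [left; split | right]; auto.
- replace (setI (add1 A b) gN) with (setI A gN); [exact HAN |].
  apply set_ext; intros x; split.
  + intros [Ax gx]; split; [left |]; assumption.
  + intros [[Ax | ->] gx]; [split; assumption | destruct (D gb gx)].
Qed.

Lemma maximal_sum_family_l B : maximal_in sum_family B -> maximal_in PM (setI B gM).
Proof.
intros [[Bg [HBM HBN]] maxB]; split; [exact HBM |].
intros T HT BT.
assert (Tg := PM_ground HT).
assert (BNg : subset (setI B gN) gN) by (intros x [_ gx]; exact gx).
assert (TB : subset (setU T (setI B gN)) B).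
{ apply maxB.
  - split; [intros x [Tx | [_ gx]]; [left; exact (Tg x Tx) | right; exact gx] |].
    rewrite (setI_setU_l D Tg BNg), (setI_setU_r D Tg BNg); split; assumption.
  - intros x Bx; destruct (Bg x Bx) as [gx | gx];
      [left; exact (BT x (conj Bx gx)) | right; split; assumption]. }
intros x Tx; split; [exact (TB x (or_introl Tx)) | exact (Tg x Tx)].
Qed.

Lemma maximal_sum_family_of_traces B :
  subset B (setU gM gN) -> maximal_in PM (setI B gM) -> maximal_in PN (setI B gN) ->
  maximal_in sum_family B.
Proof.
intros Bg [HBM maxM] [HBN maxN]; split; [split; [exact Bg | split; assumption] |].
intros T [Tg [HTM HTN]] BT x Tx.
assert (TM := maxM _ HTM (fun y h => conj (BT y (proj1 h)) (proj2 h))).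
assert (TN := maxN _ HTN (fun y h => conj (BT y (proj1 h)) (proj2 h))).
destruct (Tg x Tx) as [gx | gx];
  [exact (proj1 (TM x (conj Tx gx))) | exact (proj1 (TN x (conj Tx gx)))].
Qed.

End SumFamily.

Lemma sum_familyC (E : Type) (gM gN : set E) (PM PN : set E -> Prop) :
  sum_family gM gN PM PN = sum_family gN gM PN PM.
Proof.
apply set_ext; intros I; split; intros [Ig [HM HN]];
  (split; [intros x Ix; destruct (Ig x Ix); [right | left]; assumption | split; assumption]).
Qed.

Lemma sum_family_restrict (E : Type) (gM gN : set E) (PM PN : set E -> Prop) X :
  (fun I => sum_family gM gN PM PN I /\ subset I X) =
  sum_family gM gN (fun I => PM I /\ subset I (setI X gM))
                   (fun I => PN I /\ subset I (setI X gN)).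
Proof.
apply set_ext; intros I; split.
- intros [[Ig [HIM HIN]] IX]; split; [exact Ig |].
  split; split; try assumption; intros x [Ix gx]; split; auto.
- intros [Ig [[HIM IMX] [HIN INX]]]; split; [split; [exact Ig | split; assumption] |].
  intros x Ix; destruct (Ig x Ix) as [gx | gx];
    [exact (proj1 (IMX x (conj Ix gx))) | exact (proj1 (INX x (conj Ix gx)))].
Qed.

Lemma sum_family_add1_r (E : Type) (gM gN : set E) (PM PN : set E -> Prop) :
  disjoint gM gN -> forall A b,
  sum_family gM gN PM PN A -> gN b -> PN (add1 (setI A gN) b) ->
  sum_family gM gN PM PN (add1 A b).
Proof.
intros D; rewrite !(sum_familyC gM); apply sum_family_add1_l.
intros x gNx gMx; exact (D x gMx gNx).
Qed.

Lemma maximal_sum_family (E : Type) (gM gN : set E) (PM PN : set E -> Prop) B :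
  disjoint gM gN ->
  (forall X, PM X -> subset X gM) -> (forall X, PN X -> subset X gN) ->
  maximal_in (sum_family gM gN PM PN) B <->
  subset B (setU gM gN) /\ maximal_in PM (setI B gM) /\ maximal_in PN (setI B gN).
Proof.
intros D PMg PNg; split.
- intros maxB; split; [exact (proj1 (proj1 maxB)) |].
  split; [exact (maximal_sum_family_l D PMg maxB) |].
  rewrite sum_familyC in maxB.
  exact (maximal_sum_family_l (fun x gNx gMx => D x gMx gNx) PNg maxB).
- intros [Bg [maxM maxN]]; exact (maximal_sum_family_of_traces Bg maxM maxN).
Qed.

Section Union.
Variables (E : Type) (M N : matroid E).
Hypotheses (HM : is_matroid M) (HN : is_matroid N) (D : disjoint (ground M) (ground N)).

Lemma indep_union :
  indep (matroid_union M N) = sum_family (ground M) (ground N) (indep M) (indep N).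
Proof.
apply set_ext; intros I; split.
- intros [S [T [HS [HT IST]]]]; split; [|split].
  + intros x Ix; destruct (proj1 (IST x) Ix) as [Sx | Tx];
      [left; exact (indep_ground HM HS x Sx) | right; exact (indep_ground HN HT x Tx)].
  + apply (indep_subset HM HS); intros x [Ix gx].
    destruct (proj1 (IST x) Ix) as [Sx | Tx];
      [exact Sx | destruct (D x gx (indep_ground HN HT x Tx))].
  + apply (indep_subset HN HT); intros x [Ix gx].
    destruct (proj1 (IST x) Ix) as [Sx | Tx];
      [destruct (D x (indep_ground HM HS x Sx) gx) | exact Tx].
- intros [Ig [HIM HIN]]; exists (setI I (ground M)), (setI I (ground N)).
  split; [exact HIM | split; [exact HIN |]]; intros x; split.
  + intros Ix; destruct (Ig x Ix); [left | right]; split; assumption.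
  + intros [[Ix _] | [Ix _]]; exact Ix.
Qed.

Lemma indep_finitarization_union :
  indep (finitarization (matroid_union M N)) =
  sum_family (ground M) (ground N) (indep (finitarization M)) (indep (finitarization N)).
Proof.
assert (trace_fin : forall J G : set E, finite_set J -> finite_set (setI J G))
  by (intros J G; apply finite_subset; intros x [Jx _]; exact Jx).
apply set_ext; intros I; split.
- intros [Ig Ifin]; split; [exact Ig |].
  split; (split; [intros x [_ gx]; exact gx |]); intros J JI Jfin;
    assert (HJ : indep (matroid_union M N) J)
      by (apply Ifin; [intros x Jx; exact (proj1 (JI x Jx)) | exact Jfin]);
    rewrite indep_union in HJ; destruct HJ as [_ [HJM HJN]].
  + apply (indep_subset HM HJM); intros x Jx; split; [exact Jx | exact (proj2 (JI x Jx))].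
  + apply (indep_subset HN HJN); intros x Jx; split; [exact Jx | exact (proj2 (JI x Jx))].
- intros [Ig [[_ IMfin] [_ INfin]]]; split; [exact Ig |].
  intros J JI Jfin; rewrite indep_union; split; [|split].
  + intros x Jx; exact (Ig x (JI x Jx)).
  + apply IMfin; [intros x [Jx gx]; split; [exact (JI x Jx) | exact gx] |].
    exact (trace_fin J _ Jfin).
  + apply INfin; [intros x [Jx gx]; split; [exact (JI x Jx) | exact gx] |].
    exact (trace_fin J _ Jfin).
Qed.

Lemma is_base_union B :
  is_base (matroid_union M N) B <->
  subset B (setU (ground M) (ground N)) /\
  is_base M (setI B (ground M)) /\ is_base N (setI B (ground N)).
Proof.
unfold is_base; rewrite indep_union.
exact (maximal_sum_family _ _ B D (@indep_ground _ _ HM) (@indep_ground _ _ HN)).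
Qed.

Lemma is_base_finitarization_union F :
  is_base (finitarization (matroid_union M N)) F <->
  subset F (setU (ground M) (ground N)) /\
  is_base (finitarization M) (setI F (ground M)) /\
  is_base (finitarization N) (setI F (ground N)).
Proof.
unfold is_base; rewrite indep_finitarization_union.
exact (maximal_sum_family _ _ F D (fun X HX => proj1 HX) (fun X HX => proj1 HX)).
Qed.

Lemma union_base_augment A B :
  is_base (matroid_union M N) B -> indep (matroid_union M N) A ->
  ~ is_base (matroid_union M N) A ->
  exists b, B b /\ ~ A b /\ indep (matroid_union M N) (add1 A b).
Proof.
rewrite !is_base_union, indep_union; intros [_ [BM BN]] HA notA.
assert (HA' := HA); destruct HA' as [Ag [HAM HAN]].
destruct (not_and_or _ _ (fun AMN => notA (conj Ag AMN))) as [notAM | notAN].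
- destruct (base_augment HM BM HAM notAM) as [b [[Bb gb] [nAb Hb]]].
  exists b; split; [exact Bb | split; [intros Ab; exact (nAb (conj Ab gb)) |]].
  exact (sum_family_add1_l D b HA gb Hb).
- destruct (base_augment HN BN HAN notAN) as [b [[Bb gb] [nAb Hb]]].
  exists b; split; [exact Bb | split; [intros Ab; exact (nAb (conj Ab gb)) |]].
  exact (sum_family_add1_r D b HA gb Hb).
Qed.

Lemma union_indep_maximal_extension A X :
  indep (matroid_union M N) A -> subset A X -> subset X (ground (matroid_union M N)) ->
  exists S, maximal_in (fun I => indep (matroid_union M N) I /\ subset I X) S /\
            subset A S /\ subset S X.
Proof.
rewrite indep_union, sum_family_restrict; intros [Ag [HAM HAN]] AX _.
assert (trace_sub : forall G, subset (setI A G) (setI X G))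
  by (intros G x [Ax gx]; split; [exact (AX x Ax) | exact gx]).
destruct (indep_maximal_extension HM HAM (trace_sub _) (fun x h => proj2 h))
  as [SM [maxSM [ASM SMX]]].
destruct (indep_maximal_extension HN HAN (trace_sub _) (fun x h => proj2 h))
  as [SN [maxSN [ASN SNX]]].
assert (SMg : subset SM (ground M)) by (intros x Sx; exact (proj2 (SMX x Sx))).
assert (SNg : subset SN (ground N)) by (intros x Sx; exact (proj2 (SNX x Sx))).
exists (setU SM SN); split; [|split].
- apply maximal_sum_family; [exact D | intros Y [_ YX] y Yy; exact (proj2 (YX y Yy)) ..|].
  rewrite (setI_setU_l D SMg SNg), (setI_setU_r D SMg SNg).
  split; [intros x [Sx | Sx]; [left; exact (SMg x Sx) | right; exact (SNg x Sx)] |].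
  split; assumption.
- intros x Ax; destruct (Ag x Ax) as [gx | gx];
    [left; exact (ASM x (conj Ax gx)) | right; exact (ASN x (conj Ax gx))].
- intros x [Sx | Sx]; [exact (proj1 (SMX x Sx)) | exact (proj1 (SNX x Sx))].
Qed.

Lemma is_matroid_union : is_matroid (matroid_union M N).
Proof.
split; [|split; [|split; [|split]]].
- intros I HI; rewrite indep_union in HI; exact (proj1 HI).
- rewrite indep_union; split; [intros x [] |].
  split; [apply (indep_subset HM (indep0 HM)) | apply (indep_subset HN (indep0 HN))];
    intros x [[] _].
- intros A B HA BA; rewrite indep_union in *; destruct HA as [Ag [HAM HAN]].
  split; [intros x Bx; exact (Ag x (BA x Bx)) |].
  split; [apply (indep_subset HM HAM) | apply (indep_subset HN HAN)];
    intros x [Bx gx]; split; [exact (BA x Bx) | exact gx | exact (BA x Bx) | exact gx].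
- exact union_base_augment.
- exact union_indep_maximal_extension.
Qed.

Lemma nearly_finitary_union :
  nearly_finitary M -> nearly_finitary N -> nearly_finitary (matroid_union M N).
Proof.
intros nfM nfN F B HF HB BF.
apply is_base_finitarization_union in HF; destruct HF as [Fg [FM FN]].
apply is_base_union in HB; destruct HB as [_ [BM BN]].
assert (trace_BF : forall G, subset (setI B G) (setI F G))
  by (intros G x [Bx gx]; split; [exact (BF x Bx) | exact gx]).
apply finite_subset with
  (setU (setD (setI F (ground M)) (setI B (ground M)))
        (setD (setI F (ground N)) (setI B (ground N)))).
- intros x [Fx nBx]; destruct (Fg x Fx) as [gx | gx]; [left | right];
    (split; [split; assumption | intros [Bx _]; exact (nBx Bx)]).
- exact (finite_setU (nfM _ _ FM BM (trace_BF _)) (nfN _ _ FN BN (trace_BF _))).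
Qed.

Lemma k_nearly_finitary_union_l k :
  k_nearly_finitary k (matroid_union M N) -> k_nearly_finitary k M.
Proof.
intros Hk FM BM HFM HBM BFM.
destruct (exists_base HN) as [BN HBN].
destruct (exists_finitarization_base_superset HN (proj1 HBN)) as [FN [HFN BFN]].
assert (FMg : subset FM (ground M)) by exact (proj1 (proj1 HFM)).
assert (FNg : subset FN (ground N)) by exact (proj1 (proj1 HFN)).
assert (BMg : subset BM (ground M)) by exact (indep_ground HM (proj1 HBM)).
assert (BNg : subset BN (ground N)) by exact (indep_ground HN (proj1 HBN)).
apply card_le_subset with (setD (setU FM FN) (setU BM BN)).
- intros x [Fx nBx]; split; [left; exact Fx |].
  intros [Bx | Bx]; [exact (nBx Bx) | exact (D x (FMg x Fx) (BNg x Bx))].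
- apply Hk.
  + apply is_base_finitarization_union.
    rewrite (setI_setU_l D FMg FNg), (setI_setU_r D FMg FNg).
    split; [intros x [Fx | Fx]; [left; exact (FMg x Fx) | right; exact (FNg x Fx)] |].
    split; assumption.
  + apply is_base_union.
    rewrite (setI_setU_l D BMg BNg), (setI_setU_r D BMg BNg).
    split; [intros x [Bx | Bx]; [left; exact (BMg x Bx) | right; exact (BNg x Bx)] |].
    split; assumption.
  + intros x [Bx | Bx]; [left; exact (BFM x Bx) | right; exact (BFN x Bx)].
Qed.

End Union.

Unset Implicit Arguments.

Theorem theorem3p4p6 (E : Type) (M N : matroid E) :
  is_matroid M -> is_matroid N ->
  nearly_finitary M -> (forall k : nat, ~ k_nearly_finitary k M) ->
  nearly_finitary N ->
  disjoint (ground M) (ground N) ->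
  is_matroid (matroid_union M N) /\
  nearly_finitary (matroid_union M N) /\
  (forall k : nat, ~ k_nearly_finitary k (matroid_union M N)).
Proof.
intros HM HN nfM not_knfM nfN D.
split; [|split].
- exact (is_matroid_union HM HN D).
- exact (nearly_finitary_union HM HN D nfM nfN).
- intros k knf; exact (not_knfM k (k_nearly_finitary_union_l HM HN D knf)).
Qed.
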